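(* As $\mathbb F_3$-subspaces of the space of functions $\mathbb F_{3^{2m}}\to\mathbb F_3$, \[ \big\langle \mathrm{Tr}_{2m}(at^{3^m+1})\,\mathrm{Tr}_{2m}(bt) : a\in\mathbb F_{3^m}^*,\ b\in\mathbb F_{3^{2m}}\big\rangle_{\mathbb F_3}=\Big\{\sum_{i=0}^{m-1}\mathrm{Tr}_{2m}\big(c_it^{(3^m+1)3^i+1}\big): c_0,\dots,c_{m-1}\in\mathbb F_{3^{2m}}\Big\}. \]
   Context: $m\ge2$ is an integer; $\mathrm{Tr}_{2m}:\mathbb F_{3^{2m}}\to\mathbb F_3$ is the absolute trace $x\mapsto\sum_{i=0}^{2m-1}x^{3^i}$; $\mathbb F_{3^m}\subseteq\mathbb F_{3^{2m}}$; each expression is regarded as a function of $t\in\mathbb F_{3^{2m}}$, with pointwise products; $\langle\cdot\rangle_{\mathbb F_3}$ denotes $\mathbb F_3$-linear span. *)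

From mathcomp Require Import all_boot all_algebra all_field.
Set Implicit Arguments. Unset Strict Implicit. Unset Printing Implicit Defensive.
Import GRing.Theory.
Local Open Scope ring_scope.

(* Absolute trace Tr_{2m} : F -> F_3, with F_3 viewed as the prime subfield of F
   (F is a field of order 3^(2m), so its prime subfield is F_3). *)
Definition trace2m (F : finFieldType) (m : nat) (x : F) : F :=
  \sum_(i < (2 * m)%N) x ^+ (3 ^ i).

Definition embF3 (F : finFieldType) (k : 'F_3) : F := (nat_of_ord k)%:R.

Definition in_F3span (F : finFieldType) (S : (F -> F) -> Prop) (g : F -> F) : Prop :=
  exists (n : nat) (k : 'I_n -> 'F_3) (fs : 'I_n -> F -> F),
    (forall i, S (fs i)) /\
    (forall t, g t = \sum_(i < n) embF3 F (k i) * fs i t).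

Definition gen_family (F : finFieldType) (m : nat) (f : F -> F) : Prop :=
  exists a b : F, a ^+ (3 ^ m) = a /\ a != 0 /\
    (forall t, f t = trace2m m (a * t ^+ (3 ^ m + 1)) * trace2m m (b * t)).

Definition rhs_set (F : finFieldType) (m : nat) (g : F -> F) : Prop :=
  exists c : 'I_m -> F,
    forall t, g t = \sum_(i < m) trace2m m (c i * t ^+ ((3 ^ m + 1) * 3 ^ i + 1)).

From mathcomp Require Import all_boot all_algebra all_field.
From mathcomp Require Import ring zify.
From mathcomp Require cyclic.
Set Implicit Arguments. Unset Strict Implicit. Unset Printing Implicit Defensive.
Import GRing.Theory.
Local Open Scope ring_scope.

(* Write q = 3^m and e_i = (q+1) 3^i + 1.  The proof rests on one identity.
   If A lies in the subfield F_q then Tr_{2m}(A) = 2 Tr_m(A) = -Tr_m(A), and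
   Tr_m(A) lies in F_3, so it can be moved inside the F_3-linear Tr_{2m}:
     Tr(A) Tr(B) = - sum_{j<m} Tr(A^(3^j) B).
   With A = a t^(q+1) (in F_q when a is, since t^(q+1) is a norm) and B = b t
   this expands each generator as
     Tr(a t^(q+1)) Tr(b t) = - sum_{i<m} Tr(a^(3^i) b t^e_i),            (1)
   which gives the inclusion "span in RHS" because the right-hand side is
   closed under F_3-linear combinations.  Conversely, fix a generator lam of
   F_q^* and i0 < m; summing (1) over a = lam^j, b = c lam^(j (q-1-3^i0)),
   j < q-1, the inner sums are character sums of lam^(3^i - 3^i0), which
   vanish for i <> i0 and equal q-1 = -1 for i = i0; this isolates the single
   term Tr(c t^e_i0). *)

Lemma span_ext (F : finFieldType) (S : (F -> F) -> Prop) (g g' : F -> F) :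
  in_F3span S g -> (forall t, g t = g' t) -> in_F3span S g'.
Proof.
by move=> [n [k [fs [hfs hg]]]] e; exists n, k, fs; split => // t; rewrite -e hg.
Qed.

Lemma span_gen (F : finFieldType) (S : (F -> F) -> Prop) (f : F -> F) :
  S f -> in_F3span S f.
Proof.
move=> hf; exists 1%N, (fun _ => 1), (fun _ => f); split => // t.
by rewrite big_ord1 /embF3 /= mul1r.
Qed.

Lemma span_add (F : finFieldType) (S : (F -> F) -> Prop) (g1 g2 : F -> F) :
  in_F3span S g1 -> in_F3span S g2 -> in_F3span S (fun t => g1 t + g2 t).
Proof.
move=> [n1 [k1 [fs1 [h1 e1]]]] [n2 [k2 [fs2 [h2 e2]]]].
exists (n1 + n2)%N, (fun i => match split i with inl j => k1 j | inr j => k2 j end),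
  (fun i => match split i with inl j => fs1 j | inr j => fs2 j end).
split => [i|t]; first by case: (split i).
rewrite big_split_ord e1 e2; congr (_ + _); apply: eq_bigr => j _.
  by rewrite (unsplitK (inl _ j)).
by rewrite (unsplitK (inr _ j)).
Qed.

Lemma span_sum (F : finFieldType) (S : (F -> F) -> Prop) n (h : 'I_n -> F -> F) :
  (forall i, in_F3span S (h i)) -> in_F3span S (fun t => \sum_(i < n) h i t).
Proof.
elim: n h => [|n IH] h hh.
  exists 0%N, (fun _ => 0), (fun _ _ => 0); split; first by case.
  by move=> t; rewrite !big_ord0.
apply: span_ext (span_add (IH _ (fun i => hh (widen_ord (leqnSn n) i))) (hh ord_max)) _.
by move=> t; rewrite big_ord_recr.
Qed.

Lemma prim_root_sum_eq0 (R : idomainType) n (z : R) k :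
  n.-primitive_root z -> ~~ (n %| k)%N -> \sum_(j < n) (z ^+ k) ^+ j = 0.
Proof.
move=> zP nk; have := subrX1 (z ^+ k) n.
rewrite exprAC (prim_expr_order zP) expr1n subrr => /esym/eqP.
by rewrite mulf_eq0 subr_eq0 -(prim_order_dvd zP) (negbTE nk) => /eqP.
Qed.

(* For distinct i, i0 < m, the exponent 3^i - 3^i0 (shifted to be
   nonnegative) is not divisible by 3^m - 1, as 0 < |3^i - 3^i0| < 3^m - 1. *)
Lemma not_dvd_shifted_powers m i i0 : (i < m)%N -> (i0 < m)%N -> i != i0 ->
  ~~ (3 ^ m - 1 %| 3 ^ i + (3 ^ m - 1 - 3 ^ i0))%N.
Proof.
move=> lt_im lt_i0m ne_ii0.
have : (3 * 3 ^ i <= 3 ^ m)%N by rewrite -expnS leq_pexp2l.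
have : (3 * 3 ^ i0 <= 3 ^ m)%N by rewrite -expnS leq_pexp2l.
have : (0 < 3 ^ i)%N by rewrite expn_gt0.
have : (0 < 3 ^ i0)%N by rewrite expn_gt0.
have : (3 ^ i != 3 ^ i0)%N by rewrite eqn_exp2l.
move: (3 ^ i)%N (3 ^ i0)%N (3 ^ m)%N => x y q /eqP ne_xy *.
by apply/negP => /dvdnP [[|[|k]] hk]; nia.
Qed.

Lemma finField_prim_root (F : finFieldType) : exists z : F, (#|F|.-1).-primitive_root z.
Proof.
have cF : (0 < #|F|)%N by apply/card_gt0P; exists 0.
have hall : all (#|F|.-1).-unity_root (enum (predC1 (0 : F))).
  apply/allP => x; rewrite mem_enum /= => hx; rewrite unity_rootE.
  have := expf_card x; rewrite -(prednK cF) exprS /= => E.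
  by apply/eqP; apply: (mulfI hx); rewrite mulr1.
have hs : (#|F|.-1 <= size (enum (predC1 (0%R : F))))%N by rewrite -cardE cardC1.
have n0 : (0 < #|F|.-1)%N by rewrite -ltnS prednK // finNzRing_gt1.
by case/hasP: (cyclic.has_prim_root n0 hall (enum_uniq _) hs) => z _ hz; exists z.
Qed.

Lemma subfield_generator (F : finFieldType) m :
  #|F| = (3 ^ (2 * m))%N -> exists lam : F, (3 ^ m - 1).-primitive_root lam.
Proof.
move=> hF; have [z zP] := finField_prim_root F.
have order_split : (#|F|.-1 = (3 ^ m - 1) * (3 ^ m + 1))%N.
  by rewrite hF mul2n -addnn expnD; nia.
have dvd_order : (3 ^ m - 1 %| #|F|.-1)%N by rewrite order_split dvdn_mulr.
by exists (z ^+ (#|F|.-1 %/ (3 ^ m - 1))%N); exact: (dvdn_prim_root zP dvd_order).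
Qed.

Section CharacteristicThree.

Variable F : finFieldType.
Hypothesis pcharF3 : 3%N \in [pchar F].

Lemma frobeniusD k (x y : F) : (x + y) ^+ (3 ^ k) = x ^+ (3 ^ k) + y ^+ (3 ^ k).
Proof. by apply: exprDn_pchar; rewrite pnatX pnatE // pcharF3. Qed.

Lemma frobenius_sum k I (r : seq I) (P : pred I) (f : I -> F) :
  (\sum_(i <- r | P i) f i) ^+ (3 ^ k) = \sum_(i <- r | P i) f i ^+ (3 ^ k).
Proof.
apply: (big_morph (fun x => x ^+ (3 ^ k))); first exact: frobeniusD.
by rewrite expr0n expn_eq0.
Qed.

Lemma fixed_frobenius (c : F) k : c ^+ 3 = c -> c ^+ (3 ^ k) = c.
Proof. by move=> c3; elim: k => [|k IH]; rewrite ?expr1 // expnS exprM c3. Qed.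

Lemma embF3_cube (k : 'F_3) : embF3 F k ^+ 3 = embF3 F k.
Proof.
rewrite /embF3; case: k => [[|[|[|//]]]] _ /=; rewrite ?expr0n ?expr1n //.
by rewrite -natrX (_ : 2 ^ 3 = 2 + 3 * 2)%N // natrD natrM (pcharf0 pcharF3) mul0r addr0.
Qed.

Lemma trace2mD m (x y : F) : trace2m m (x + y) = trace2m m x + trace2m m y.
Proof. by rewrite /trace2m -big_split; apply: eq_bigr => i _; apply: frobeniusD. Qed.

Lemma trace2m0 m : trace2m m (0 : F) = 0.
Proof. by rewrite /trace2m big1 // => i _; rewrite expr0n expn_eq0. Qed.

Lemma trace2mN m (x : F) : trace2m m (- x) = - trace2m m x.
Proof. by apply/eqP; rewrite -addr_eq0 -trace2mD addNr trace2m0. Qed.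

Lemma trace2m_sum m I (r : seq I) (P : pred I) (f : I -> F) :
  trace2m m (\sum_(i <- r | P i) f i) = \sum_(i <- r | P i) trace2m m (f i).
Proof. by apply: (big_morph (trace2m m)); [apply: trace2mD | apply: trace2m0]. Qed.

Lemma trace2mZ m (c x : F) : c ^+ 3 = c -> trace2m m (c * x) = c * trace2m m x.
Proof.
move=> c3; rewrite /trace2m mulr_sumr; apply: eq_bigr => i _.
by rewrite exprMn (fixed_frobenius _ c3).
Qed.

Definition trace_m (m : nat) (x : F) : F := \sum_(j < m) x ^+ (3 ^ j).

(* On the subfield F_{3^m} the map trace_m takes values in F_3: its terms are
   permuted cyclically by cubing. *)
Lemma trace_m_cube m (A : F) : A ^+ (3 ^ m) = A -> trace_m m A ^+ 3 = trace_m m A.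
Proof.
move=> hA; rewrite /trace_m (frobenius_sum 1).
have shift := erefl (\sum_(j < m.+1) A ^+ (3 ^ j)).
rewrite {1}big_ord_recl big_ord_recr /= expn0 expr1 hA addrC in shift.
move/addrI: shift <-; apply: eq_bigr => j _.
by rewrite -exprM -expnSr.
Qed.

(* On F_{3^m}, Tr_{2m} runs twice over the terms of trace_m, and 2 = -1. *)
Lemma trace2m_subfield m (A : F) : A ^+ (3 ^ m) = A -> trace2m m A = - trace_m m A.
Proof.
move=> hA; rewrite /trace2m mul2n -addnn big_split_ord /=.
under [X in _ + X]eq_bigr => j _ do rewrite expnD exprM hA.
apply/eqP; rewrite -subr_eq0 opprK -mulr2n -mulrSr -mulr_natl.
by rewrite pcharf0 // mul0r.
Qed.

Lemma trace2m_mul_subfield m (A B : F) : A ^+ (3 ^ m) = A ->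
  trace2m m A * trace2m m B = - \sum_(j < m) trace2m m (A ^+ (3 ^ j) * B).
Proof.
move=> hA; rewrite trace2m_subfield // mulNr -trace2mZ ?trace_m_cube //.
by rewrite /trace_m mulr_suml trace2m_sum.
Qed.

Lemma rhs_span m (S : (F -> F) -> Prop) (g : F -> F) :
  (forall f, S f -> rhs_set m f) -> in_F3span S g -> rhs_set m g.
Proof.
move=> hS [n [k [fs [hfs hg]]]].
have /fin_all_exists [c hc] : forall l, exists c : {ffun 'I_m -> F}, forall t,
    fs l t = \sum_(i < m) trace2m m (c i * t ^+ ((3 ^ m + 1) * 3 ^ i + 1)).
  move=> l; have [c hc] := hS _ (hfs l).
  by exists [ffun i => c i] => t; rewrite hc; apply: eq_bigr => i _; rewrite ffunE.
exists (fun i => \sum_(l < n) embF3 F (k l) * c l i) => t.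
rewrite hg; under eq_bigr => l _ do rewrite hc mulr_sumr.
rewrite exchange_big; apply: eq_bigr => i _ /=.
rewrite mulr_suml trace2m_sum; apply: eq_bigr => l _.
by rewrite -mulrA (trace2mZ _ _ (embF3_cube _)).
Qed.

Section FieldOfOrder3Pow2m.

Variable m : nat.
Hypothesis frobenius2m : forall x : F, x ^+ (3 ^ (2 * m)) = x.

Lemma gen_family_expand (a b t : F) : a ^+ (3 ^ m) = a ->
  trace2m m (a * t ^+ (3 ^ m + 1)) * trace2m m (b * t) =
  - \sum_(i < m) trace2m m (a ^+ (3 ^ i) * b * t ^+ ((3 ^ m + 1) * 3 ^ i + 1)).
Proof.
move=> ha; rewrite trace2m_mul_subfield.
  congr (- _); apply: eq_bigr => i _; congr trace2m.
  by rewrite exprMn -exprM exprD expr1; ring.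
rewrite exprMn ha -exprM mulnDl mul1n -expnD addnn -mul2n exprD frobenius2m.
by rewrite exprD expr1; ring.
Qed.

Lemma gen_family_rhs (f : F -> F) : gen_family m f -> rhs_set m f.
Proof.
move=> [a [b [ha [_ hf]]]]; exists (fun i => - (a ^+ (3 ^ i) * b)) => t.
rewrite hf gen_family_expand // -sumrN; apply: eq_bigr => i _.
by rewrite mulNr trace2mN.
Qed.

Variable lam : F.
Hypothesis lam_prim : (3 ^ m - 1).-primitive_root lam.

Lemma pow3m_succ : (3 ^ m = (3 ^ m - 1).+1)%N.
Proof. by rewrite subn1 prednK // expn_gt0. Qed.

Lemma lam_pow_subfield j : (lam ^+ j) ^+ (3 ^ m) = lam ^+ j.
Proof. by rewrite exprAC pow3m_succ exprS (prim_expr_order lam_prim) mulr1. Qed.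

(* The character sums selecting the index i0: for i = i0 the sum has
   3^m - 1 = -1 terms equal to 1, otherwise it vanishes by orthogonality. *)
Lemma character_sum (i i0 : 'I_m) :
  \sum_(j < 3 ^ m - 1) (lam ^+ j) ^+ (3 ^ i) * lam ^+ (j * (3 ^ m - 1 - 3 ^ i0))
  = if i == i0 then -1 else 0.
Proof.
under eq_bigr => j _ do rewrite -exprM -exprD -mulnDr mulnC exprM.
case: eqP => [<- | /eqP ne_ii0]; last first.
  by apply: prim_root_sum_eq0 lam_prim _; apply: not_dvd_shifted_powers.
have le_pow_i : (3 ^ i <= 3 ^ m - 1)%N.
  by rewrite leq_subRL ?expn_gt0 // add1n -[_.+1]/(3 ^ i).+1 ltn_exp2l.
rewrite subnKC // (prim_expr_order lam_prim).
under eq_bigr => j _ do rewrite expr1n.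
rewrite sumr_const card_ord; apply/eqP; rewrite -addr_eq0 -mulrSr -pow3m_succ.
by rewrite natrX pcharf0 // expr0n gtn_eqF // (leq_ltn_trans _ (ltn_ord i)).
Qed.

Lemma trace_monomial_in_span (i0 : 'I_m) (c : F) :
  in_F3span (gen_family m) (fun t => trace2m m (c * t ^+ ((3 ^ m + 1) * 3 ^ i0 + 1))).
Proof.
have lam_neq0 : lam != 0.
  by rewrite (prim_root_eq0 lam_prim) -lt0n (prim_order_gt0 lam_prim).
pose b (j : nat) := c * lam ^+ (j * (3 ^ m - 1 - 3 ^ i0)).
have gen_j (j : 'I_(3 ^ m - 1)) : gen_family m
    (fun t => trace2m m (lam ^+ j * t ^+ (3 ^ m + 1)) * trace2m m (b j * t)).
  by exists (lam ^+ j), (b j); rewrite lam_pow_subfield expf_neq0.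
apply: span_ext (span_sum (fun j => span_gen (gen_j j))) _.
move=> t /=; under eq_bigr => j _ do rewrite gen_family_expand ?lam_pow_subfield //.
rewrite sumrN exchange_big /=.
have collect (i : 'I_m) :
    \sum_(j < 3 ^ m - 1) trace2m m ((lam ^+ j) ^+ (3 ^ i) * b j * t ^+ ((3 ^ m + 1) * 3 ^ i + 1))
    = trace2m m (c * t ^+ ((3 ^ m + 1) * 3 ^ i + 1) * (if i == i0 then -1 else 0)).
  rewrite -trace2m_sum -character_sum mulr_sumr; congr trace2m.
  by apply: eq_bigr => j _; rewrite /b; ring.
under eq_bigr => i _ do rewrite collect.
rewrite (bigD1 i0) //= eqxx big1 => [|i /negbTE ->]; last by rewrite mulr0 trace2m0.
by rewrite addr0 mulrN1 trace2mN opprK.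
Qed.

End FieldOfOrder3Pow2m.

End CharacteristicThree.

Theorem lemma3p13 (F : finFieldType) (m : nat) (hm : (2 <= m)%N)
    (hF : #|F| = (3 ^ (2 * m))%N) :
  forall g : F -> F, in_F3span (gen_family m) g <-> rhs_set m g.
Proof.
have pcharF3 : 3%N \in [pchar F] by apply: (card_finPcharP hF).
have frobenius2m (x : F) : x ^+ (3 ^ (2 * m)) = x by rewrite -hF expf_card.
have [lam lam_prim] := subfield_generator hF.
move=> g; split; first exact: rhs_span (gen_family_rhs pcharF3 frobenius2m).
move=> [c hc]; apply: span_ext (span_sum (fun i =>
  trace_monomial_in_span pcharF3 frobenius2m lam_prim i (c i))) _.
by move=> t; rewrite hc.
Qed.
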